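(* Let $A$ be the Brauer graph algebra of a Brauer graph $G$, and let $C=c_n\cdots c_{l+1}c_l\cdots c_1$ be a string in $\overline{\mathrm{gr}(A)}$ with $l<n$, $s(c_1)=t(c_n)=i$, such that $c_l\cdots c_1$ or $c_1^{-1}\cdots c_l^{-1}$ lies in $\mathbb{P}$, where $i$ is the corresponding unbalanced edge with endpoints $v_S,v_L$. If $G_{i,S}\neq G_{i,L}$ and $G_{i,S}$ is a tree, then at least one of the following holds: (1) some vertex $v$ of $G_{i,S}$ has $m(v)\geq2$; (2) there are adjacent vertices $v,w$ of $G_{i,S}$ with $d_G(v,v_S)+1=d_G(w,v_S)$ and $\mathrm{grd}(v)<\mathrm{grd}(w)$. In other words, $G$ does not satisfy the $\star$-condition with respect to $i$.
   Context: $k$ algebraically closed. Brauer graph $G$: finite connected graph with multiplicity $m$ and cyclic orderings of edges at vertices. $A=kQ/I$: $Q_0=E(G)$; for each vertex $v$ with $m(v)\mathrm{val}(v)\ge2$ arrows along the cyclic ordering forming the special cycle $C_v$; $I$ generated by $C_v(\alpha)^{m(v)}-C_{v'}(\alpha')^{m(v')}$, $\alpha C_v(\alpha)^{m(v)}$, non-special compositions. $\mathrm{gr}(A)=\bigoplus\mathrm{rad}^nA/\mathrm{rad}^{n+1}A$. $\overline{\mathrm{gr}(A)}=\mathrm{gr}(A)/\bigoplus_{i\in L'}\mathrm{soc}(\mathrm{gr}(A)e_i)$, $L'$ the $i$ with $\mathrm{rad}(Ae_i)/\mathrm{soc}(Ae_i)=V_1\oplus V_2$, $V_1,V_2\ne0$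 of equal length; a string algebra. Strings: reduced words in arrows and inverse arrows avoiding relations. $\mathrm{grd}(v)=m(v)\mathrm{val}(v)$ if $>1$, else $m(v')\mathrm{val}(v')$ for the unique neighbour. An edge $i$ is unbalanced if its endpoints have different graded degrees, $v_S$ smaller, $v_L$ larger; $G_{i,S},G_{i,L}$ components of $G$ minus $i$ containing $v_S,v_L$. For unbalanced $i$, $r_i=C_{v_L}(\alpha)^{m(v_L)}$ where $C_{v_L}(\alpha)$ is the special $i$-cycle at $v_L$; $\mathbb{P}=\{r_i\}$. $d_G(u,v)$: number of edges of the walk from $u$ to $v$ in the tree. $\star$-condition w.r.t. $i$: $G_{i,S}\ne G_{i,L}$, $G_{i,S}$ a tree with all multiplicities $1$, and the walk from $v_S$ to any vertex of $G_{i,S}$ has weakly decreasing graded degrees. *)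

From mathcomp Require Import all_boot.

(* A Brauer graph, encoded by half-edges.
   - bg_hv h : the vertex at which half-edge h sits;
   - bg_he h : the edge of G containing h (edges = quiver vertices of A);
   - bg_inv h : the other half of the same edge (loops: both halves at one vertex);
   - bg_succ h : the successor of h in the cyclic ordering at bg_hv h;
   - bg_mult v : the multiplicity m(v). *)
Record brauer_graph := BrauerGraph {
  bg_V : finType;
  bg_H : finType;
  bg_E : finType;
  bg_hv : bg_H -> bg_V;
  bg_he : bg_H -> bg_E;
  bg_inv : bg_H -> bg_H;
  bg_succ : bg_H -> bg_H;
  bg_mult : bg_V -> nat;
  bg_invK : forall h, bg_inv (bg_inv h) = h;
  bg_inv_neq : forall h, bg_inv h != h;
  bg_heP : forall h h', (bg_he h == bg_he h') = (h' == h) || (h' == bg_inv h);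
  bg_he_surj : forall e, exists h, bg_he h = e;
  bg_succ_inj : injective bg_succ;
  bg_succ_hv : forall h, bg_hv (bg_succ h) = bg_hv h;
  bg_succ_cyc : forall h h', bg_hv h = bg_hv h' -> exists k, iter k bg_succ h = h';
  bg_hv_surj : forall v, exists h, bg_hv h = v;
  bg_nonempty : exists h : bg_H, True;
  bg_connected : forall u v,
    connect (fun x y => [exists h, (bg_hv h == x) && (bg_hv (bg_inv h) == y)]) u v;
  bg_mult_pos : forall v, 0 < bg_mult v
}.

Section BrauerDefs.
Variable G : brauer_graph.
Local Notation V := (bg_V G).
Local Notation H := (bg_H G).
Local Notation E := (bg_E G).
Local Notation hv := (bg_hv G).
Local Notation he := (bg_he G).
Local Notation inv := (bg_inv G).
Local Notation succ := (bg_succ G).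

(* valency (loops counted twice) and m(v) val(v) *)
Definition val (v : V) : nat := #|[set h | hv h == v]|.
Definition mval (v : V) : nat := bg_mult G v * val v.

Definition grd (v : V) : nat :=
  if 1 < mval v then mval v
  else if [pick h | hv h == v] is Some h then mval (hv (inv h)) else 0.

(* Arrows of Q: one arrow for each half-edge h at a vertex v with
   m(v)val(v) >= 2, from edge (he h) to edge (he (succ h)). *)
Definition is_arrow (h : H) : bool := 1 < mval (hv h).

(* In \overline{gr(A)}, the (unique) special path of length m(v)val(v)
   starting with arrow h (i.e. C_v(h)^{m(v)}) is nonzero iff the other
   endpoint of the edge is truncated or has strictly smaller m*val. *)
Definition long_half (h : H) : bool :=
  (mval (hv (inv h)) == 1) || (mval (hv (inv h)) < mval (hv h)).
Definition maxlen (h : H) : nat :=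
  if long_half h then mval (hv h) else (mval (hv h)).-1.

(* A path of arrows, listed in order of application (first arrow first),
   is nonzero in \overline{gr(A)} iff it is special (consecutive in the
   cyclic ordering) and not longer than maxlen of its first arrow. *)
Definition nonzero_path (p : seq H) : bool :=
  if p is h :: t then (size p <= maxlen h) && path (fun x y => y == succ x) h t
  else true.

(* Letters: (h, true) = arrow h, (h, false) = inverse arrow h^{-1}. *)
Definition letter := (H * bool)%type.
Definition src (c : letter) : E := if c.2 then he c.1 else he (succ c.1).
Definition tgt (c : letter) : E := if c.2 then he (succ c.1) else he c.1.
Definition inv_pair (c d : letter) : bool := (c.1 == d.1) && (c.2 != d.2).

(* A word C = c_n ... c_1 is represented by the list [:: c_1; ...; c_n]. *)
Definition is_string (w : seq letter) : Prop :=
  all (fun c => is_arrow c.1) w /\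
  (if w is c :: t then path (fun x y => (tgt x == src y) && ~~ inv_pair x y) c t
   else true) /\
  (forall a b, a <= b -> b < size w ->
     let seg := take (b - a).+1 (drop a w) in
     (all (fun c => c.2) seg -> nonzero_path (map fst seg)) /\
     (all (fun c => ~~ c.2) seg -> nonzero_path (rev (map fst seg)))).

(* r_i = C_{v_L}(alpha)^{m(v_L)} as a word [c_1; ...; c_l], alpha = arrow hL,
   and the word r_i^{-1}. *)
Definition r_word (hL : H) : seq letter :=
  [seq (iter k succ hL, true) | k <- iota 0 (mval (hv hL))].
Definition r_word_inv (hL : H) : seq letter :=
  [seq (iter (mval (hv hL) - k.+1) succ hL, false) | k <- iota 0 (mval (hv hL))].

Definition adj_minus (i : E) : rel V :=
  fun x y => [exists h, [&& he h != i, hv h == x & hv (inv h) == y]].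

(* the component of G minus i containing u contains no cycle (closed trail
   with pairwise distinct edges; loops and multiple edges included). *)
Definition comp_acyclic (i : E) (u : V) : Prop :=
  ~ exists c : seq H,
      [/\ c != [::],
          all (fun h => (he h != i) && connect (adj_minus i) u (hv h)) c,
          uniq (map he c) &
          cycle (fun x y => hv (inv x) == hv y) c].

Fixpoint reach (i : E) (u : V) (k : nat) : {set V} :=
  if k is k'.+1 then
    reach i u k' :|: [set y | [exists x in reach i u k', adj_minus i x y]]
  else [set u].

(* graph distance in G minus i (for vertices in the same component) *)
Definition dist (i : E) (u v : V) : nat :=
  find (fun k => v \in reach i u k) (iota 0 #|V|).

End BrauerDefs.

From Pilot Require Import Defs.
From mathcomp Require Import all_boot.
From mathcomp Require Import zify.

(* After the prefix [r_i], a full turn around [v_L], the string has to turn and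
   enter [G_{i,S}] through the half-edge of [i] at [v_S]; as [G_{i,S}] is attached
   to the rest of [G] only through [i], it stays there until it leaves along [i].
   Assume all multiplicities in [G_{i,S}] are 1 and look at a letter at a vertex
   [x] farthest from [v_S].  Its maximal direct (or inverse) substring turns
   around [x] and is entered and left through edges leading no farther from
   [v_S]; in a tree the only such edge is the edge to the parent [y] of [x], or
   the edge [i] itself when [x = v_S].  So that substring is a full turn around
   [x] from one half-edge back to itself, which is nonzero in gr(A)-bar only if
   [m(y)val(y) < m(x)val(x)].  For [x = v_S] this contradicts
   [grd(v_S) < grd(v_L)]; otherwise [(y, x)] witnesses the second alternative. *)

Set Implicit Arguments.
Unset Strict Implicit.
Unset Printing Implicit Defensive.

Section BrauerGraph.
Variable G : brauer_graph.
Local Notation hv := (bg_hv G).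
Local Notation he := (bg_he G).
Local Notation inv := (bg_inv G).
Local Notation succ := (bg_succ G).

Lemma he_inv h : he (inv h) = he h.
Proof. by apply/esym/eqP; rewrite bg_heP eqxx orbT. Qed.

Lemma he_eq h h' : he h = he h' -> h' = h \/ h' = inv h.
Proof. by move/eqP; rewrite bg_heP => /orP[/eqP|/eqP]; auto. Qed.

Lemma hv_iter_succ k h : hv (iter k succ h) = hv h.
Proof. by elim: k => //= k IH; rewrite bg_succ_hv. Qed.

Lemma val_order h : Defs.val G (hv h) = order succ h.
Proof.
apply: eq_card => h'; rewrite inE; apply/eqP/idP => [e|c].
- by have [k <-] := @bg_succ_cyc G _ _ (esym e); exact: fconnect_iter.
- by rewrite -(iter_findex c) hv_iter_succ.
Qed.

Lemma iter_succ_mval h : iter (mval G (hv h)) succ h = h.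
Proof.
rewrite /mval; elim: (bg_mult G _) => //= k IH.
by rewrite mulSn iterD IH val_order iter_order //; apply: bg_succ_inj.
Qed.

Lemma order_le_period h r : 0 < r -> iter r succ h = h -> order succ h <= r.
Proof.
move=> r_gt0 hr; rewrite leqNgt; apply/negP => /findex_iter.
by rewrite hr findex0 => r0; rewrite -r0 in r_gt0.
Qed.

Lemma mval_gt0 h : 0 < mval G (hv h).
Proof. by rewrite muln_gt0 bg_mult_pos; apply/card_gt0P; exists h; rewrite inE. Qed.

Lemma maxlen_le_mval h : maxlen G h <= mval G (hv h).
Proof. by rewrite /maxlen; case: ifP => // _; exact: leq_pred. Qed.

(* A special path returning to its first half-edge is at least [val] long,
   i.e. [mval] long when the multiplicity is one; only a long half-edge has
   [maxlen] that large. *)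
Lemma long_half_of_rotation h r : bg_mult G (hv h) <= 1 -> 0 < r ->
  iter r succ h = h -> r <= maxlen G h -> long_half G h.
Proof.
move=> m1 r_gt0 hr r_le; have m_eq1 : bg_mult G (hv h) = 1.
  by have := bg_mult_pos G (hv h); lia.
have := leq_trans (order_le_period r_gt0 hr) r_le.
rewrite -val_order -(mul1n (Defs.val _ _)) -m_eq1 -/(mval G _) /maxlen.
by case: ifP => // _; have := mval_gt0 h; lia.
Qed.

Lemma grd_mval v : 1 < mval G v -> grd G v = mval G v.
Proof. by rewrite /grd => ->. Qed.

End BrauerGraph.

Lemma constant_run_start (f : nat -> bool) t : exists2 a, a <= t &
  (forall k, a <= k <= t -> f k = f t) /\ (a = 0 \/ f a.-1 != f t).
Proof.
suff: forall s, s <= t -> (forall k, s <= k <= t -> f k = f t) ->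
    exists2 a, a <= t & (forall k, a <= k <= t -> f k = f t) /\ (a = 0 \/ f a.-1 != f t).
  by move/(_ t (leqnn t)); apply=> k kt; have -> : k = t by lia.
elim=> [|s IH] st hs; first by exists 0 => //; split; [|left].
have [e|ne] := eqVneq (f s) (f t); last by exists s.+1 => //; split; [|right].
apply: IH => [|k /andP[sk kt]]; first lia.
by have [->|ks] := eqVneq k s; last apply: hs; lia.
Qed.

Lemma constant_run_end (f : nat -> bool) n t : t < n -> exists2 b, t <= b < n &
  (forall k, t <= k <= b -> f k = f t) /\ (b.+1 = n \/ f b.+1 != f t).
Proof.
move=> tn; suff: forall s, t <= s < n -> (forall k, t <= k <= s -> f k = f t) ->
    exists2 b, t <= b < n & (forall k, t <= k <= b -> f k = f t) /\ (b.+1 = n \/ f b.+1 != f t).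
  by move/(_ t); apply=> [|k kt]; [lia | have -> : k = t by lia].
move=> s; elim: {s}(n - s) {-2}s (erefl (n - s)) => [|m IH] s e sn hs; first lia.
have [sn'|sn'] := eqVneq s.+1 n; first by exists s => //; split; [|left].
have [e'|ne] := eqVneq (f s.+1) (f t); last by exists s => //; split; [|right].
apply: (IH s.+1) => [|| k /andP[tk ks]]; [lia | lia |].
by have [->|ks'] := eqVneq k s.+1; last apply: hs; lia.
Qed.

Section Strings.
Variable G : brauer_graph.
Local Notation H := (bg_H G).
Local Notation hv := (bg_hv G).
Local Notation he := (bg_he G).
Local Notation inv := (bg_inv G).
Local Notation succ := (bg_succ G).

(* The half-edges through which a letter leaves its source and enters its
   target: the arrow [h] runs from [h] to [succ h] around [hv h]. *)
Definition src_half (c : letter G) : H := if c.2 then c.1 else succ c.1.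
Definition tgt_half (c : letter G) : H := if c.2 then succ c.1 else c.1.

Lemma he_src_half c : he (src_half c) = src G c.
Proof. by rewrite /src /src_half; case: c.2. Qed.

Lemma he_tgt_half c : he (tgt_half c) = tgt G c.
Proof. by rewrite /tgt /tgt_half; case: c.2. Qed.

Lemma hv_src_half c : hv (src_half c) = hv c.1.
Proof. by rewrite /src_half; case: c.2; rewrite ?bg_succ_hv. Qed.

Lemma hv_tgt_half c : hv (tgt_half c) = hv c.1.
Proof. by rewrite /tgt_half; case: c.2; rewrite ?bg_succ_hv. Qed.

Lemma nonzero_path_size p h : nonzero_path G p -> size p <= maxlen G (head h p).
Proof. by case: p => //= h' p /andP[]. Qed.

Variables (w : seq (letter G)) (x0 : letter G).
Hypothesis hw : is_string G w.
Local Notation "w_[ k ]" := (nth x0 w k) (at level 8, format "w_[ k ]").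

Lemma string_arrow k : k < size w -> 1 < mval G (hv w_[k].1).
Proof. by move=> lt; case: hw => /all_nthP-/(_ x0 k lt). Qed.

Definition dir_run a b :=
  [/\ a <= b, b < size w & forall k, a <= k <= b -> w_[k].2 = w_[a].2].

Lemma dir_run_maxlen a b : dir_run a b ->
  (b - a).+1 <= maxlen G (if w_[a].2 then w_[a].1 else w_[b].1).
Proof.
case=> ab bw hd; have [hdir hinv] := (hw.2.2 a b ab bw).
set S := take _ _ in hdir hinv.
have szS : size S = (b - a).+1 by rewrite size_takel // size_drop; lia.
have nthS k : k <= b - a -> nth x0 S k = w_[a + k].
  by move=> kb; rewrite nth_take // nth_drop.
have allS : all (fun c : letter G => c.2 == w_[a].2) S.
  by apply/(all_nthP x0) => k; rewrite szS ltnS => kb; rewrite nthS // hd //; lia.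
case: ifP allS => dir allS.
- have /hdir/(nonzero_path_size x0.1) : all (fun c : letter G => c.2) S.
    by apply/allP => c /(allP allS) /eqP.
  by rewrite size_map szS -nth0 (nth_map x0) ?szS // nthS // addn0.
- have /hinv/(nonzero_path_size x0.1) : all (fun c : letter G => ~~ c.2) S.
    by apply/allP => c /(allP allS) /eqP ->.
  rewrite size_rev size_map szS -nth0 nth_rev size_map szS //.
  rewrite (nth_map x0) ?szS ?subSS ?subn0 ?nthS //.
  by have -> : a + (b - a) = b by lia.
Qed.

Lemma run_step k : k.+1 < size w -> w_[k].2 = w_[k.+1].2 ->
  src_half w_[k.+1] = tgt_half w_[k].
Proof.
move=> lt e; have [hdir hinv] := hw.2.2 k k.+1 (leqnSn k) lt.
rewrite subSnn (drop_nth x0) 1?(drop_nth x0) //= ?take0 in hdir hinv; last lia.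
rewrite /src_half /tgt_half -e; move: hdir hinv; rewrite -e.
case: (w_[k]).2 => /= [+ _|_ +].
- by move=> /(_ isT) /and3P[_ /eqP].
- by move=> /(_ isT) /and3P[_ /eqP ->].
Qed.

Lemma string_link k : k.+1 < size w ->
  (tgt G w_[k] == src G w_[k.+1]) && ~~ Defs.inv_pair G w_[k] w_[k.+1].
Proof.
by case: hw => _ [+ _]; case: w => [|c t] //= /(pathP x0) P lt; apply: P.
Qed.

Lemma turn_step k : k.+1 < size w -> w_[k].2 != w_[k.+1].2 ->
  src_half w_[k.+1] = inv (tgt_half w_[k]).
Proof.
move=> lt ne; case/andP: (string_link lt) => /eqP.
rewrite -he_src_half -he_tgt_half => /he_eq[e|//].
move: ne e; rewrite /Defs.inv_pair /src_half /tgt_half.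
case: w_[k] w_[k.+1] => [h1 []] [h2 []] //= _; first move/bg_succ_inj.
all: by move=> ->; rewrite eqxx.
Qed.

Lemma dir_run_iter a b : dir_run a b ->
  if w_[a].2 then tgt_half w_[b] = iter (b - a).+1 succ (src_half w_[a])
  else src_half w_[a] = iter (b - a).+1 succ (tgt_half w_[b]).
Proof.
elim: b => [|b IH] [ab bw hd].
  have -> : a = 0 by lia.
  by rewrite /src_half /tgt_half; case: (w_[0]).2.
have [->|lt_ab] := eqVneq a b.+1.
  by rewrite subnn /src_half /tgt_half; case: (w_[b.+1]).2.
have /IH : dir_run a b by split=> [||k kb]; [lia | lia | apply: hd; lia].
have dirb : w_[b].2 = w_[a].2 by apply: hd; lia.
have dirb1 : w_[b.+1].2 = w_[a].2 by apply: hd; lia.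
have := run_step bw (etrans dirb (esym dirb1)).
rewrite subSn; last lia.
rewrite /src_half /tgt_half dirb dirb1; case: (w_[a]).2 => /=.
- by move=> -> ->.
- by move=> step ->; rewrite -step -iterSr.
Qed.

Lemma dir_run_sub a b a' b' : dir_run a b -> a <= a' -> a' <= b' -> b' <= b ->
  dir_run a' b'.
Proof.
case=> ab bw hd aa' ab' bb'; split=> [||k kb] //; first lia.
by rewrite !hd //; lia.
Qed.

Lemma dir_run_cat a t b : dir_run a t -> dir_run t b -> dir_run a b.
Proof.
case=> at_ tw hd [tb bw hd']; split=> [||k kb] //; first lia.
by have [kt|tk] := leqP k t; [apply: hd | rewrite hd' -?(hd t) //]; lia.
Qed.

Lemma dir_run_hv a b k : dir_run a b -> a <= k <= b -> hv w_[k].1 = hv w_[a].1.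
Proof.
move=> run /andP[ak kb]; have := dir_run_iter (dir_run_sub run (leqnn a) ak kb).
by case: ifP => _ e; rewrite -hv_tgt_half -hv_src_half e hv_iter_succ
  ?hv_src_half ?hv_tgt_half.
Qed.

Lemma dir_run_length a b : dir_run a b -> (b - a).+1 <= mval G (hv w_[a].1).
Proof.
move=> run; apply: leq_trans (dir_run_maxlen run) _; case: ifP => _.
  exact: maxlen_le_mval.
have [ab _ _] := run; rewrite -(dir_run_hv run (_ : a <= b <= b)) ?ab ?leqnn //.
exact: maxlen_le_mval.
Qed.

Lemma dir_run_rotation a b g : dir_run a b -> src_half w_[a] = g ->
  tgt_half w_[b] = g -> bg_mult G (hv g) <= 1 -> long_half G g.
Proof.
move=> run ga gb m1; apply: (long_half_of_rotation m1 (ltn0Sn (b - a))).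
  by have := dir_run_iter run; case: ifP => _; rewrite ga gb.
have [ab _ hd] := run; have := dir_run_maxlen run; move: ga gb.
rewrite /src_half /tgt_half (hd b) ?ab ?leqnn //.
by case: ifP => _ ga' gb'; rewrite ?ga' ?gb'.
Qed.

Lemma dir_run_start t : t < size w ->
  exists2 a, dir_run a t & a = 0 \/ w_[a.-1].2 != w_[a].2.
Proof.
move=> tw; have [a at_ [hd ha]] := constant_run_start (fun k => w_[k].2) t.
have dira : w_[a].2 = w_[t].2 by apply: hd; rewrite at_ leqnn.
by exists a; [split=> // k kt; rewrite dira hd | rewrite dira].
Qed.

Lemma dir_run_end t : t < size w ->
  exists2 b, dir_run t b & b.+1 = size w \/ w_[b.+1].2 != w_[b].2.
Proof.
move=> tw; have [b /andP[tb bw] [hd hb]] := constant_run_end (fun k => w_[k].2) tw.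
by exists b; [split | rewrite (hd b) ?tb ?leqnn].
Qed.

End Strings.

Section Component.
Variables (G : brauer_graph) (i : bg_E G) (u : bg_V G).
Local Notation V := (bg_V G).
Local Notation H := (bg_H G).
Local Notation hv := (bg_hv G).
Local Notation he := (bg_he G).
Local Notation inv := (bg_inv G).
Local Notation adj := (adj_minus G i).
Local Notation comp := (connect adj u).
Local Notation reach := (reach G i u).
Local Notation dist := (Defs.dist G i u).

Lemma adjP x y :
  reflect (exists h, [/\ he h != i, hv h = x & hv (inv h) = y]) (adj x y).
Proof.
apply: (iffP existsP) => [[h /and3P[? /eqP ? /eqP ?]]|[h [hi <- <-]]].
  by exists h.
by exists h; rewrite hi !eqxx.
Qed.

Lemma adj_half h : he h != i -> adj (hv h) (hv (inv h)).
Proof. by move=> hi; apply/adjP; exists h. Qed.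

Lemma connect_adj x y : comp x -> adj x y -> comp y.
Proof. by move=> cx xy; apply: connect_trans cx (connect1 xy). Qed.

Lemma reachS k y :
  (y \in reach k.+1) = (y \in reach k) || [exists x in reach k, adj x y].
Proof. by rewrite /= !inE. Qed.

Lemma reach_connect k x : x \in reach k -> comp x.
Proof.
elim: k x => [|k IH] x; first by rewrite inE => /eqP ->.
by rewrite reachS => /orP[/IH //|/existsP[y /andP[/IH cy yx]]]; apply: connect_adj cy yx.
Qed.

Lemma reach_adj k x y : x \in reach k -> adj x y -> y \in reach k.+1.
Proof. by move=> xk xy; rewrite reachS; apply/orP; right; apply/existsP; exists x; rewrite xk. Qed.

Lemma connect_reach x : comp x -> exists2 k, k < #|V| & x \in reach k.
Proof.
case/connectP=> p p_adj ->; have [q q_adj q_uniq _] := shortenP p_adj.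
exists (size q); first by have := max_card (mem (u :: q)); rewrite (card_uniqP q_uniq) /=.
elim/last_ind: q q_adj {q_uniq} => [|q y IH]; first by rewrite inE.
by rewrite rcons_path last_rcons size_rcons => /andP[/IH qk]; apply: reach_adj.
Qed.

Lemma dist_le x k : x \in reach k -> k < #|V| -> dist x <= k.
Proof.
move=> xk kV; rewrite leqNgt; apply/negP => /(before_find 0).
by rewrite nth_iota // add0n xk.
Qed.

Lemma dist_reach x : comp x -> dist x < #|V| /\ x \in reach (dist x).
Proof.
case/connect_reach=> k kV xk.
have has_k : has (fun k => x \in reach k) (iota 0 #|V|).
  by apply/hasP; exists k; rewrite // mem_iota.
have := nth_find 0 has_k; rewrite has_find size_iota in has_k.
by rewrite nth_iota.
Qed.

Lemma dist_adj x y : comp x -> adj x y -> dist y <= (dist x).+1.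
Proof.
move=> cx xy; have [xV xd] := dist_reach cx.
have [yV _] := dist_reach (connect_adj cx xy).
by have [lt|] := ltnP (dist x).+1 #|V|; [apply: dist_le (reach_adj xd xy) lt | lia].
Qed.

Lemma dist_eq0 x : comp x -> dist x = 0 -> x = u.
Proof. by move=> cx d0; have [_] := dist_reach cx; rewrite d0 inE => /eqP. Qed.

Lemma dist_root : dist u = 0.
Proof.
have [uV _] := dist_reach (connect0 adj u).
by apply/eqP; rewrite -leqn0; apply: dist_le; [rewrite inE | lia].
Qed.

Lemma parent_exists x : comp x -> 0 < dist x ->
  exists h, [&& hv h == x, he h != i & dist (hv (inv h)) == (dist x).-1].
Proof.
move=> cx dx; have [xV] := dist_reach cx; rewrite -(prednK dx) reachS.
case/orP=> [xd|/existsP[y /andP[yd yx]]].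
  by have := dist_le xd (leq_ltn_trans (leq_pred _) xV); lia.
have := dist_adj (reach_connect yd) yx; have := dist_le yd.
case/adjP: yx => h [hi hy hx] yle; exists (inv h).
rewrite hx he_inv hi bg_invK hy eqxx /=; apply/eqP.
by have := yle (leq_ltn_trans (leq_pred _) xV); lia.
Qed.

Variable h0 : H.

(* [h0] is a junk default, returned only off the component or at [u]. *)
Definition par_h x :=
  odflt h0 [pick h | [&& hv h == x, he h != i & dist (hv (inv h)) == (dist x).-1]].
Definition par x := hv (inv (par_h x)).

Lemma par_hP x : comp x -> 0 < dist x ->
  [/\ hv (par_h x) = x, he (par_h x) != i & dist (par x) = (dist x).-1].
Proof.
move=> cx dx; rewrite /par /par_h; case: pickP => [h /and3P[/eqP ? ? /eqP ?] //|none].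
by have [h] := parent_exists cx dx; rewrite none.
Qed.

Lemma connect_par x : comp x -> 0 < dist x -> comp (par x).
Proof.
move=> cx dx; have [hx hi _] := par_hP cx dx.
by apply: connect_adj cx _; rewrite -{1}hx; apply: adj_half.
Qed.

Lemma par_h_inj y z : comp y -> 0 < dist y -> comp z -> 0 < dist z ->
  he (par_h y) = he (par_h z) -> y = z.
Proof.
move=> cy dy cz dz; have [hy _ py] := par_hP cy dy; have [hz _ pz] := par_hP cz dz.
case/he_eq=> [e|e]; first by rewrite -hy -hz e.
move: py pz; rewrite /par e bg_invK hy -e hz; lia.
Qed.

Definition ancestor x y := exists2 k, k <= dist x & iter k par x = y.

Lemma ancestorP x y : comp x -> ancestor x y ->
  [/\ comp y, dist y <= dist x & (dist x <= dist y -> y = x)].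
Proof.
move=> cx [k kx <-]; suff [cy ->] : comp (iter k par x) /\ dist (iter k par x) = dist x - k.
  by split=> [//||le]; [exact: leq_subr | have -> : k = 0 by lia].
elim: k kx => [|k IH] kx; first by rewrite subn0.
have [cy dy] := IH (ltnW kx); have dy0 : 0 < dist (iter k par x) by lia.
have [_ _ dpar] := par_hP cy dy0.
by rewrite /= dpar dy; split; [exact: connect_par | lia].
Qed.

Lemma ancestor_par x y : comp x -> 0 < dist x -> ancestor (par x) y -> ancestor x y.
Proof.
move=> cx dx [k kd <-]; have [_ _ dpar] := par_hP cx dx.
by exists k.+1; [lia | rewrite iterSr].
Qed.

Hypothesis acyclic : comp_acyclic G i u.

Definition trail_step (x y : H) := hv (inv x) == hv y.

Definition avoids_parent_edges a b (q : seq H) :=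
  forall h, h \in q -> forall y, ancestor a y \/ ancestor b y -> 0 < dist y ->
  he h != he (par_h y).

(* A trail in the component from [hv q0] to [hv (inv (last q0 qt))] that
   avoids the parent edges of all ancestors of its two endpoints: lifting its
   deeper endpoint to its parent keeps this invariant, so that the endpoints
   must eventually meet and close a cycle. *)
Definition fresh_trail q0 qt :=
  [/\ path trail_step q0 qt, all (fun h => (he h != i) && comp (hv h)) (q0 :: qt),
      uniq (map he (q0 :: qt)) &
      avoids_parent_edges (hv q0) (hv (inv (last q0 qt))) (q0 :: qt)].

Lemma fresh_trail_comp q0 qt : fresh_trail q0 qt ->
  comp (hv q0) /\ comp (hv (inv (last q0 qt))).
Proof.
case=> _ /allP al _ _; have /andP[_ c0] := al q0 (mem_head _ _).
have /andP[hi cl] := al _ (mem_last q0 qt).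
by split=> //; apply: connect_adj cl (adj_half hi).
Qed.

Lemma fresh_trail_open q0 qt : fresh_trail q0 qt -> hv q0 != hv (inv (last q0 qt)).
Proof.
case=> p al un _; apply/eqP => e; apply: acyclic; exists (q0 :: qt).
by split=> //; rewrite /cycle rcons_path p /= e eqxx.
Qed.

Lemma he_par_h_fresh a b y : comp a -> comp b -> a != b -> dist b <= dist a ->
  0 < dist a -> ancestor (par a) y \/ ancestor b y -> 0 < dist y ->
  he (par_h a) != he (par_h y).
Proof.
move=> ca cb ab ba da anc dy; apply/eqP => e.
have cpa := connect_par ca da; have [_ _ dpar] := par_hP ca da.
have cy : comp y by case: anc => /ancestorP-[].
rewrite -(par_h_inj ca da cy dy e) in anc.
case: anc => [/(ancestorP cpa)|/(ancestorP cb)] [_ le eq_ab]; first lia.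
by rewrite eq_ab ?eqxx in ab.
Qed.

Lemma fresh_trail_lift_head q0 qt (a := hv q0) (b := hv (inv (last q0 qt))) :
  fresh_trail q0 qt -> a != b -> dist b <= dist a -> 0 < dist a ->
  fresh_trail (inv (par_h a)) (q0 :: qt).
Proof.
move=> tr ab ba da; have [ca cb] := fresh_trail_comp tr.
case: tr => p al un fr; have [ha hi _] := par_hP ca da.
split.
- by rewrite /= /trail_step bg_invK ha eqxx.
- by apply/andP; split; [rewrite he_inv hi; exact: connect_par | exact: al].
- rewrite map_cons cons_uniq un andbT he_inv; apply/mapP => -[h hq /eqP]; rewrite eq_sym; apply/negP.
  by apply: (fr h hq a) da; left; exists 0.
- move=> h; rewrite inE => /orP[/eqP ->|hq] y /= anc dy.
    by rewrite he_inv; apply: he_par_h_fresh ca cb ab ba da anc dy.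
  by apply: (fr h hq y) dy; case: anc => [/(ancestor_par ca da)|]; auto.
Qed.

Lemma fresh_trail_lift_tail q0 qt (a := hv q0) (b := hv (inv (last q0 qt))) :
  fresh_trail q0 qt -> b != a -> dist a <= dist b -> 0 < dist b ->
  fresh_trail q0 (rcons qt (par_h b)).
Proof.
move=> tr ba ab db; subst a b; have [ca cb] := fresh_trail_comp tr.
case: tr => p al un fr; have [hb hi _] := par_hP cb db.
split; rewrite -?rcons_cons ?rcons_path ?all_rcons ?map_rcons ?rcons_uniq ?last_rcons.
- by rewrite p /trail_step hb eqxx.
- by rewrite hi hb cb.
- rewrite un andbT; apply/mapP => -[h hq /eqP]; rewrite eq_sym; apply/negP.
  by apply: (fr h hq _) db; right; exists 0.
- move=> h; rewrite mem_rcons inE => /orP[/eqP ->|hq] y anc dy.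
    by apply: (he_par_h_fresh cb ca ba ab db) dy; case: anc; auto.
  by apply: (fr h hq y) dy; case: anc => [|/(ancestor_par cb db)]; auto.
Qed.

Lemma no_fresh_trail q0 qt : ~ fresh_trail q0 qt.
Proof.
suff: forall n q0 qt,
    dist (hv q0) + dist (hv (inv (last q0 qt))) < n -> ~ fresh_trail q0 qt.
  by move/(_ _ q0 qt (ltnSn _)).
elim=> [//|n IH] {}q0 {}qt lt tr; have ab := fresh_trail_open tr.
have [ca cb] := fresh_trail_comp tr.
have root_eq : dist (hv q0) = 0 -> dist (hv (inv (last q0 qt))) = 0 -> False.
  by move=> da db; move: ab; rewrite (dist_eq0 ca da) (dist_eq0 cb db) eqxx.
have [ba|lt_ab] := leqP (dist (hv (inv (last q0 qt)))) (dist (hv q0)).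
- have da : 0 < dist (hv q0).
    by rewrite lt0n; apply/eqP => da; apply: root_eq; lia.
  apply: IH _ (fresh_trail_lift_head tr ab ba da).
  have [_ _] := par_hP ca da; rewrite /par /=; lia.
- have db : 0 < dist (hv (inv (last q0 qt))) by lia.
  apply: IH _ (fresh_trail_lift_tail tr _ (ltnW lt_ab) db); last by rewrite eq_sym.
  have [_ _] := par_hP cb db; rewrite /par last_rcons; lia.
Qed.

(* In the acyclic component every edge joins a vertex to its parent, so the
   only edge at [x] not leading farther from [u] is the parent edge of [x]. *)
Lemma descending_half_edge g : comp (hv g) -> he g != i ->
  dist (hv (inv g)) <= dist (hv g) -> 0 < dist (hv g) /\ g = par_h (hv g).
Proof.
move=> cg hi le.
have [/andP[dg /eqP gpar]|not_par] := boolP ((0 < dist (hv g)) && (g == par_h (hv g))).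
  by [].
have cig := connect_adj cg (adj_half hi).
case: (@no_fresh_trail g [::]); split=> //=; first by rewrite hi cg.
move=> h; rewrite inE => /eqP -> y anc dy; apply/eqP => /he_eq e.
have cy : comp y by case: anc => /ancestorP-[].
have [hy _ dpar] := par_hP cy dy.
case: e => e.
  have yg : hv g = y by rewrite -hy e.
  by rewrite yg e dy eqxx in not_par.
have yig : hv (inv g) = y by rewrite -hy e.
by move: dpar le; rewrite /par e bg_invK yig; lia.
Qed.

End Component.

Section StarCondition.
Variables (G : brauer_graph) (hL : bg_H G) (w : seq (letter G)).
Local Notation hv := (bg_hv G).
Local Notation he := (bg_he G).
Local Notation inv := (bg_inv G).
Local Notation succ := (bg_succ G).
Local Notation i := (he hL).
Local Notation vL := (hv hL).
Local Notation vS := (hv (inv hL)).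
Local Notation l := (mval G vL).
Local Notation adj := (adj_minus G i).
Local Notation comp := (connect adj vS).
Local Notation dist := (Defs.dist G i vS).
Local Notation par_h := (@par_h G i vS hL).
Local Notation par := (@par G i vS hL).
Local Notation x0 := (hL, true).
Local Notation "w_[ k ]" := (nth x0 w k) (at level 8, format "w_[ k ]").

Hypotheses (hw : is_string G w) (lw : l < size w).
Hypothesis prefix : take l w = r_word G hL \/ take l w = r_word_inv G hL.

Lemma prefix_run : dir_run w x0 0 l.-1 /\ tgt_half w_[l.-1] = hL.
Proof.
have l_gt0 : 0 < l := mval_gt0 hL.
have w_prefix k : k < l -> w_[k] = nth x0 (take l w) k by move=> kl; rewrite nth_take.
case: prefix => pre.
- have wk k : k < l -> w_[k] = (iter k succ hL, true).
    by move=> kl; rewrite w_prefix // pre (nth_map 0) ?size_iota // nth_iota.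
  split; first by split=> [||k kl] //; [lia | rewrite !wk //; lia].
  by rewrite wk ?prednK // /tgt_half /= -iterS (prednK l_gt0) iter_succ_mval.
- have wk k : k < l -> w_[k] = (iter (l - k.+1) succ hL, false).
    by move=> kl; rewrite w_prefix // pre (nth_map 0) ?size_iota // nth_iota.
  split; first by split=> [||k kl] //; [lia | rewrite !wk //; lia].
  by rewrite wk ?prednK // /tgt_half /= subnn.
Qed.

Lemma src_half_after_prefix : src_half w_[l] = inv hL.
Proof.
have l_gt0 : 0 < l := mval_gt0 hL.
have [run tgt_hL] := prefix_run.
suff turn : w_[l.-1].2 != w_[l].2.
  have := @turn_step _ w x0 hw l.-1; rewrite prednK // => /(_ lw turn) ->.
  by rewrite tgt_hL.
apply/negP => /eqP same; have [_ _ hd] := run.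
have run' : dir_run w x0 0 l.
  split=> // k /andP[_ kl]; have [->|kl'] := eqVneq k l.
    by rewrite -same hd //; lia.
  by rewrite hd //; lia.
have := dir_run_length hw run'.
rewrite subn0 -(dir_run_hv hw run (_ : 0 <= l.-1 <= l.-1)) ?leqnn //.
by rewrite -hv_tgt_half tgt_hL ltnn.
Qed.

Lemma hv_after_prefix : hv w_[l].1 = vS.
Proof. by rewrite -hv_src_half src_half_after_prefix. Qed.

Hypothesis grd_lt : grd G vS < grd G vL.

Lemma mval_vS_gt1 : 1 < mval G vS.
Proof. by rewrite -hv_after_prefix; apply: string_arrow. Qed.

Lemma mval_vS_lt : mval G vS < mval G vL.
Proof.
have [run tgt_hL] := prefix_run; have [_ lw' _] := run.
have : 1 < l by have := string_arrow x0 hw lw'; rewrite -hv_tgt_half tgt_hL.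
by move=> vL_gt1; move: grd_lt; rewrite !grd_mval // mval_vS_gt1.
Qed.

Hypothesis tgt_last : tgt G (last x0 w) = i.
Hypothesis sep : ~~ comp vL.

Lemma he_neq_i g : comp (hv g) -> hv g != vS -> he g != i.
Proof.
move=> cg gS; apply/eqP => /esym/he_eq[e|e]; rewrite e in cg gS.
  by move: sep; rewrite cg.
by rewrite eqxx in gS.
Qed.

Lemma he_eq_i_at_vS g : hv g = vS -> he g = i -> g = inv hL.
Proof.
by move=> gS /esym/he_eq[e|//]; move: sep; rewrite -gS e connect0.
Qed.

Lemma run_exit b : b < size w -> he (tgt_half w_[b]) != i ->
  b.+1 = size w \/ w_[b.+1].2 != w_[b].2 ->
  b.+1 < size w /\ src_half w_[b.+1] = inv (tgt_half w_[b]).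
Proof.
move=> bw hi ends; have [bw'|wb] := ltnP b.+1 (size w).
  case: ends => [e|turn]; first by rewrite e ltnn in bw'.
  by split; last apply: turn_step; rewrite // eq_sym.
have eb : b = (size w).-1 by lia.
by move: hi; rewrite eb he_tgt_half nth_last tgt_last eqxx.
Qed.

Hypotheses (acyclic : comp_acyclic G i vS) (mult1 : forall v, comp v -> bg_mult G v <= 1).

Variable t : nat.
Hypotheses (l_le_t : l <= t) (tw : t < size w) (comp_t : comp (hv w_[t].1)).
Hypothesis t_deepest : forall k, l <= k -> k < size w -> comp (hv w_[k].1) ->
  dist (hv w_[k].1) <= dist (hv w_[t].1).
Local Notation x := (hv w_[t].1).

Lemma crossing_is_parent g k : l <= k -> k < size w -> hv g = x -> he g != i ->
  hv (inv g) = hv w_[k].1 -> 0 < dist x /\ g = par_h x.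
Proof.
move=> lk kw gx gi gk; have cg : comp (hv g) by rewrite gx.
have := descending_half_edge hL acyclic cg gi; rewrite gx; apply.
by rewrite gk; apply: t_deepest; rewrite // -gk; apply: connect_adj cg (adj_half gi).
Qed.

Lemma deepest_at_root : dist x = 0 -> False.
Proof.
move=> d0; have x_vS : x = vS := dist_eq0 comp_t d0.
have [b run ends] := dir_run_end x0 lw; have [lb bw _] := run.
have hvb : hv (tgt_half w_[b]) = vS.
  by rewrite hv_tgt_half (dir_run_hv hw run (_ : l <= b <= b)) ?lb ?leqnn // hv_after_prefix.
have gb : tgt_half w_[b] = inv hL.
  have [gi|gi] := eqVneq (he (tgt_half w_[b])) i; first exact: he_eq_i_at_vS hvb gi.
  have [bw' turn] := run_exit bw gi ends.
  have gk : hv (inv (tgt_half w_[b])) = hv w_[b.+1].1 by rewrite -turn hv_src_half.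
  have gx : hv (tgt_half w_[b]) = x by rewrite hvb x_vS.
  by have [] := crossing_is_parent (leqW lb) bw' gx gi gk; rewrite d0.
have := dir_run_rotation hw run src_half_after_prefix gb (mult1 (connect0 _ _)).
rewrite /long_half bg_invK; have := mval_vS_lt; have := mval_vS_gt1; lia.
Qed.

Lemma deepest_off_root : 0 < dist x -> exists v u,
  [/\ comp v, comp u, adj v u, dist v + 1 = dist u & grd G v < grd G u].
Proof.
move=> dx; have xS : x != vS by apply: contraTneq dx => ->; rewrite dist_root.
have [a run_a start] := dir_run_start x0 tw.
have [b run_b ends] := dir_run_end x0 tw.
have run := dir_run_cat run_a run_b; have [at_ _ _] := run_a; have [tb bw _] := run_b.
have hv_run k : a <= k <= b -> hv w_[k].1 = x.
  by move=> kr; rewrite (dir_run_hv hw run kr) -(dir_run_hv hw run (_ : a <= t <= b)) ?at_.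
have la : l < a.
  rewrite ltnNge; apply/negP => al; move: xS.
  by rewrite -(hv_run l) ?al ?(leq_trans l_le_t tb) // hv_after_prefix eqxx.
have ea : a.-1.+1 = a := prednK (leq_ltn_trans (leq0n l) la).
have turn_a : src_half w_[a] = inv (tgt_half w_[a.-1]).
  case: start => [a0|turn]; first lia.
  by have := @turn_step _ w x0 hw a.-1; rewrite ea; apply=> //; lia.
have ga_x : hv (src_half w_[a]) = x by rewrite hv_src_half hv_run ?leqnn ?(leq_trans at_ tb).
have gb_x : hv (tgt_half w_[b]) = x by rewrite hv_tgt_half hv_run ?leqnn ?(leq_trans at_ tb).
have he_x g : hv g = x -> he g != i by move=> gx; apply: he_neq_i; rewrite gx.
have [_ ga] : 0 < dist x /\ src_half w_[a] = par_h x.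
  apply: (@crossing_is_parent _ a.-1 _ _ ga_x (he_x _ ga_x)); [lia | lia |].
  by rewrite turn_a bg_invK hv_tgt_half.
have [bw' turn_b] := run_exit bw (he_x _ gb_x) ends.
have [_ gb] : 0 < dist x /\ tgt_half w_[b] = par_h x.
  apply: (@crossing_is_parent _ b.+1 _ bw' gb_x (he_x _ gb_x)); first lia.
  by rewrite -turn_b hv_src_half.
have [hpx pxi dpar] := par_hP hL comp_t dx.
have long := dir_run_rotation hw run ga gb (mult1 _); rewrite hpx in long.
have par_arrow : 1 < mval G (par x).
  by rewrite /par -ga turn_a bg_invK hv_tgt_half; apply: (string_arrow _ hw); lia.
exists (par x), x; split=> //; first exact: connect_par.
- by rewrite -{2}hpx -{1}(bg_invK G (par_h x)); apply: adj_half; rewrite he_inv pxi.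
- by rewrite dpar addn1 prednK.
- rewrite !grd_mval ?string_arrow //; move: long par_arrow.
  by rewrite /long_half /par hpx; lia.
Qed.

End StarCondition.

Theorem mainTheorem19 (G : brauer_graph) (hL : bg_H G) (w : seq (letter G)) :
  let i := bg_he G hL in
  let vL := bg_hv G hL in
  let vS := bg_hv G (bg_inv G hL) in
  let l := mval G vL in
  grd G vS < grd G vL ->
  is_string G w ->
  l < size w ->
  src G (nth (hL, true) w 0) = i ->
  tgt G (last (hL, true) w) = i ->
  (take l w = r_word G hL \/ take l w = r_word_inv G hL) ->
  ~~ connect (adj_minus G i) vS vL ->
  comp_acyclic G i vS ->
  (exists v, connect (adj_minus G i) vS v /\ 2 <= bg_mult G v) \/
  (exists v u, [/\ connect (adj_minus G i) vS v, connect (adj_minus G i) vS u,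
                   adj_minus G i v u,
                   dist G i vS v + 1 = dist G i vS u &
                   grd G v < grd G u]).
Proof.
move=> i vL vS l grd_lt hw lw _ tgt_last prefix sep acyclic.
have [|light] := boolP [exists v, connect (adj_minus G i) vS v && (1 < bg_mult G v)].
  by case/existsP=> v /andP[cv mv]; left; exists v.
have mult1 v : connect (adj_minus G i) vS v -> bg_mult G v <= 1.
  by move=> cv; rewrite leqNgt; apply: contra light => mv; apply/existsP; exists v; rewrite cv.
pose letter_vertex (k : 'I_(size w)) := bg_hv G (nth (hL, true) w k).1.
pose in_comp (k : 'I_(size w)) := (l <= k) && connect (adj_minus G i) vS (letter_vertex k).
have l_in : in_comp (Ordinal lw).
  by rewrite /in_comp leqnn /letter_vertex /= (hv_after_prefix hw lw prefix) connect0.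
case: (arg_maxnP (dist G i vS \o letter_vertex) l_in) => t /andP[lt ct] t_max.
have t_deepest k : l <= k -> k < size w ->
    connect (adj_minus G i) vS (bg_hv G (nth (hL, true) w k).1) ->
    dist G i vS (bg_hv G (nth (hL, true) w k).1) <= dist G i vS (letter_vertex t).
  by move=> lk kw ck; apply: (t_max (Ordinal kw)); rewrite /in_comp lk.
have [d0|d_gt0] := posnP (dist G i vS (letter_vertex t)).
  by case: (deepest_at_root hw lw prefix grd_lt tgt_last sep acyclic mult1 lt (ltn_ord t) ct t_deepest d0).
by right; apply: (deepest_off_root hw lw prefix grd_lt tgt_last sep acyclic mult1 lt (ltn_ord t) ct t_deepest d_gt0).
Qed.
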